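(* Let $L\supseteq\mathsf{CKCEM}$ be a logic in the language $\mathcal{L}_\triangleright$, and let $p,q,r$ be three distinct atoms. If $L$ has the uniform Lyndon interpolation property, then $L\vdash(p\triangleright r)\vee(q\triangleright\neg r)$.
   Context: Formulas of $\mathcal{L}_\triangleright$: atoms, $\bot$, $\wedge,\vee,\to$, binary $\triangleright$; $\top:=\bot\to\bot$, $\neg A:=A\to\bot$. A logic is a set of formulas containing all classical tautologies and closed under substitution and modus ponens. $\mathsf{CE}$ is the smallest set containing all instances of classical tautologies and closed under modus ponens and the rule: from $\phi_0\leftrightarrow\phi_1$ and $\psi_0\leftrightarrow\psi_1$ infer $(\phi_0\triangleright\psi_0)\to(\phi_1\triangleright\psi_1)$. $\mathsf{CKCEM}$ is $\mathsf{CE}$ plus all instances of (CM) $(\phi\triangleright\psi\wedge\theta)\to(\phi\triangleright\psi)\wedge(\phi\triangleright\theta)$, (CC) $(\phi\triangleright\psi)\wedge(\phi\triangleright\theta)\to(\phi\triangleright\psi\wedge\theta)$, (CN) $\phi\triangleright\top$, (CEM) $(\phi\triangleright\psi)\vee(\phi\triangleright\neg\psi)$. Positive/negative variables: $V^+(p)=\{p\}$, $V^-(p)=\varnothing$; $V^\pm(\bot)=V^\pm(\top)=\varnothing$; $V^\pm(\phi\odot\psi)=V^\pm(\phi)\cup V^\pm(\psi)$ for $\odot\in\{\wedge,\vee\}$; $V^+(\phi\to\psi)=V^-(\phi)\cup V^+(\psi)$, $V^-(\phi\to\psi)=V^+(\phi)\cup V^-(\psi)$; $V^+(\phi\triangleright\psi)=V^-(\phi)\cup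 V^+(\psi)$, $V^-(\phi\triangleright\psi)=V^+(\phi)\cup V^-(\psi)$. $p^\circ$-free: $p\notin V^\circ(\cdot)$. ULIP: for every formula $\phi$, atom $p$, $\circ\in\{+,-\}$ there are $p^\circ$-free formulas $\forall^\circ p\,\phi$, $\exists^\circ p\,\phi$ with $V^\dagger(\cdot)\subseteq V^\dagger(\phi)$ for both $\dagger\in\{+,-\}$, such that $L\vdash\forall^\circ p\,\phi\to\phi$; for every $p^\circ$-free $\psi$, $L\vdash\psi\to\phi$ implies $L\vdash\psi\to\forall^\circ p\,\phi$; $L\vdash\phi\to\exists^\circ p\,\phi$; for every $p^\circ$-free $\psi$, $L\vdash\phi\to\psi$ implies $L\vdash\exists^\circ p\,\phi\to\psi$. *)

From Stdlib Require Import Bool.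

Inductive form : Type :=
| Var  : nat -> form
| Bot  : form
| And  : form -> form -> form
| Or   : form -> form -> form
| Imp  : form -> form -> form
| Cond : form -> form -> form.

Definition Top : form := Imp Bot Bot.
Definition Neg (A : form) : form := Imp A Bot.
Definition Iff (A B : form) : form := And (Imp A B) (Imp B A).

(* Classical evaluation: atoms get truth values by v, and each conditional
   subformula phi |> psi is treated as an arbitrary (new) atom via w. *)
Fixpoint eval (v : nat -> bool) (w : form -> form -> bool) (f : form) : bool :=
  match f with
  | Var n => v n
  | Bot => false
  | And a b => eval v w a && eval v w b
  | Or a b => eval v w a || eval v w b
  | Imp a b => implb (eval v w a) (eval v w b)
  | Cond a b => w a b
  end.

Definition tautology (f : form) : Prop :=
  forall v w, eval v w f = true.

Fixpoint subst (s : nat -> form) (f : form) : form :=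
  match f with
  | Var n => s n
  | Bot => Bot
  | And a b => And (subst s a) (subst s b)
  | Or a b => Or (subst s a) (subst s b)
  | Imp a b => Imp (subst s a) (subst s b)
  | Cond a b => Cond (subst s a) (subst s b)
  end.

Definition is_logic (L : form -> Prop) : Prop :=
  (forall f, tautology f -> L f) /\
  (forall s f, L f -> L (subst s f)) /\
  (forall f g, L (Imp f g) -> L f -> L g).

Inductive CKCEM : form -> Prop :=
| ck_taut : forall f, tautology f -> CKCEM f
| ck_mp : forall f g, CKCEM (Imp f g) -> CKCEM f -> CKCEM g
| ck_re : forall f0 f1 g0 g1, CKCEM (Iff f0 f1) -> CKCEM (Iff g0 g1) ->
    CKCEM (Imp (Cond f0 g0) (Cond f1 g1))
| ck_CM : forall f g h,
    CKCEM (Imp (Cond f (And g h)) (And (Cond f g) (Cond f h)))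
| ck_CC : forall f g h,
    CKCEM (Imp (And (Cond f g) (Cond f h)) (Cond f (And g h)))
| ck_CN : forall f, CKCEM (Cond f Top)
| ck_CEM : forall f g, CKCEM (Or (Cond f g) (Cond f (Neg g))).

(* V b f p : p is a positive (b = true) / negative (b = false) variable of f *)
Fixpoint V (b : bool) (f : form) (p : nat) : Prop :=
  match f with
  | Var q => if b then p = q else False
  | Bot => False
  | And a c => V b a p \/ V b c p
  | Or a c => V b a p \/ V b c p
  | Imp a c => V (negb b) a p \/ V b c p
  | Cond a c => V (negb b) a p \/ V b c p
  end.

Definition pfree (b : bool) (p : nat) (f : form) : Prop := ~ V b f p.

Definition ULIP (L : form -> Prop) : Prop :=
  forall (f : form) (p : nat) (b : bool),
    exists A E : form,
      pfree b p A /\ pfree b p E /\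
      (forall c q, V c A q -> V c f q) /\
      (forall c q, V c E q -> V c f q) /\
      L (Imp A f) /\
      (forall g, pfree b p g -> L (Imp g f) -> L (Imp g A)) /\
      L (Imp f E) /\
      (forall g, pfree b p g -> L (Imp f g) -> L (Imp E g)).

(* Let E be a uniform post-interpolant of ¬(q ▷ r) with respect to q^+.  Since q
   does not occur negatively in ¬(q ▷ r), E does not mention q at all, so
   substituting p for q in ¬(q ▷ r) → E yields ¬(p ▷ r) → E.  On the other
   hand (CEM) gives ¬(q ▷ r) → (q ▷ ¬r), whose consequent is q^+-free, so by
   uniformity E → (q ▷ ¬r).  Chaining the two implications gives the claim. *)
From Stdlib Require Import Bool Arith.

Definition rename (q p : nat) (n : nat) : form :=
  if Nat.eqb n q then Var p else Var n.

Lemma subst_id (s : nat -> form) (f : form) :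
  (forall b n, V b f n -> s n = Var n) -> subst s f = f.
Proof.
  induction f as [n| |a IHa c IHc|a IHa c IHc|a IHa c IHc|a IHa c IHc];
    intro Hs; simpl.
  - exact (Hs true n eq_refl).
  - reflexivity.
  - rewrite IHa, IHc; [reflexivity| |]; intros b n Hn; apply (Hs b); simpl; tauto.
  - rewrite IHa, IHc; [reflexivity| |]; intros b n Hn; apply (Hs b); simpl; tauto.
  - rewrite IHa, IHc; [reflexivity| |]; intros b n Hn.
    + apply (Hs b); simpl; tauto.
    + apply (Hs (negb b)); simpl; rewrite negb_involutive; tauto.
  - rewrite IHa, IHc; [reflexivity| |]; intros b n Hn.
    + apply (Hs b); simpl; tauto.
    + apply (Hs (negb b)); simpl; rewrite negb_involutive; tauto.
Qed.

Lemma subst_rename_absent (q p : nat) (f : form) :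
  (forall b, ~ V b f q) -> subst (rename q p) f = f.
Proof.
  intro Hq; apply subst_id; intros b n Hn; unfold rename.
  destruct (Nat.eqb_spec n q) as [->|_]; [contradiction (Hq b Hn)|reflexivity].
Qed.

Lemma rename_other (q p n : nat) : n <> q -> rename q p n = Var n.
Proof. intro Hn; unfold rename; apply Nat.eqb_neq in Hn; rewrite Hn; reflexivity. Qed.

Lemma rename_self (q p : nat) : rename q p q = Var p.
Proof. unfold rename; rewrite Nat.eqb_refl; reflexivity. Qed.

Lemma logic_or_of_neg_imp (L : form -> Prop) (f e g : form) :
  is_logic L -> L (Imp (Neg f) e) -> L (Imp e g) -> L (Or f g).
Proof.
  intros [Htaut [_ Hmp]] Hfe Heg.
  refine (Hmp _ _ (Hmp _ _ (Htaut _ _) Hfe) Heg).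
  intros v w; simpl.
  destruct (eval v w f), (eval v w e), (eval v w g); reflexivity.
Qed.

Lemma CKCEM_neg_cond (f g : form) : CKCEM (Imp (Neg (Cond f g)) (Cond f (Neg g))).
Proof.
  eapply ck_mp; [|apply (ck_CEM f g)].
  apply ck_taut; intros v w; simpl.
  destruct (w f g), (w f (Neg g)); reflexivity.
Qed.

Lemma ULIP_post_interpolant_absent (L : form -> Prop) (f : form) (q : nat) :
  ULIP L -> ~ V false f q ->
  exists E, (forall b, ~ V b E q) /\ L (Imp f E) /\
    (forall g, pfree true q g -> L (Imp f g) -> L (Imp E g)).
Proof.
  intros HU Hneg.
  destruct (HU f q true) as (_ & E & _ & HEpos & _ & HEvars & _ & _ & HfE & HEmin).
  exists E; split; [|split; assumption].
  intros [|] HV; [exact (HEpos HV)|exact (Hneg (HEvars false q HV))].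
Qed.

Theorem mainTheorem13 :
  forall (L : form -> Prop),
    is_logic L ->
    (forall f, CKCEM f -> L f) ->
    forall p q r : nat, p <> q -> q <> r -> p <> r ->
    ULIP L ->
    L (Or (Cond (Var p) (Var r)) (Cond (Var q) (Neg (Var r)))).
Proof.
  intros L HL HCK p q r _ Hqr _ HU.
  destruct (ULIP_post_interpolant_absent L (Neg (Cond (Var q) (Var r))) q HU)
    as (E & HEq & HfE & HEmin).
  { simpl; intros [[[] | Hq] | []]; exact (Hqr Hq). }
  apply (logic_or_of_neg_imp L _ E _ HL).
  - destruct HL as (_ & Hsubst & _).
    pose proof (Hsubst (rename q p) _ HfE) as H; simpl in H.
    rewrite rename_self, (rename_other q p r), subst_rename_absent in H
      by (exact HEq || congruence).
    exact H.
  - apply HEmin; [unfold pfree; simpl; tauto|].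
    apply HCK, CKCEM_neg_cond.
Qed.
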